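(* Let $\mathcal{D}=\{(\mathbf{x}_i,y_i)\}_{i\in\mathcal{D}}$ be a finite training set with inputs $\mathcal{X}=\{\mathbf{x}_i\}_{i\in\mathcal{D}}$, let $\boldsymbol{\phi}_i=\boldsymbol{\phi}(\mathbf{x}_i)\in\mathbb{R}^P$ be feature vectors, and consider the generalized linear model $f_{\mathbf{w}}^i=\boldsymbol{\phi}_i^\top\mathbf{w}$, $\mathbf{w}\in\mathbb{R}^P$. Let $A$ be the (strictly convex, differentiable) log-partition function of a scalar exponential family, $h=A'$, and define the loss $\ell(y,h(f))=-yf+A(f)$, with $\ell_i(\mathbf{w})=\ell(y_i,h(f_{\mathbf{w}}^i))$. Let $\mathcal{R}(\mathbf{w})=\tfrac12\delta\|\mathbf{w}\|^2$ with $\delta>0$, and let $$\mathbf{w}_*=\arg\min_{\mathbf{w}}\sum_{i\in\mathcal{D}}\ell_i(\mathbf{w})+\mathcal{R}(\mathbf{w}).$$ Define the K-prior with memory $\mathcal{M}=\mathcal{X}$: $$\mathcal{K}(\mathbf{w};\mathbf{w}_*,\mathcal{X})=\sum_{i\in\mathcal{X}}\ell\big(h(f_{\mathbf{w}_*}^i),h(f_{\mathbf{w}}^i)\big)+\tfrac12\delta\|\mathbf{w}-\mathbf{w}_*\|^2,$$ where $\ell(h(f_{\mathbf{w}_*}^i),h(f_{\mathbf{w}}^i))=-h(f_{\mathbf{w}_*}^i)f_{\mathbf{w}}^i+A(f_{\mathbf{w}}^i)$. Let $j\notin\mathcal{D}$ be a new example $(\mathbf{x}_j,y_j)$ and $k\in\mathcal{D}$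 an existing example, and define $$\mathbf{w}_+=\arg\min_{\mathbf{w}}\sum_{i\in\mathcal{D}\cup j}\ell_i(\mathbf{w})+\mathcal{R}(\mathbf{w}),\qquad \mathbf{w}_-=\arg\min_{\mathbf{w}}\sum_{i\in\mathcal{D}\setminus k}\ell_i(\mathbf{w})+\mathcal{R}(\mathbf{w}),$$ $$\hat{\mathbf{w}}_+=\arg\min_{\mathbf{w}}\ \ell_j(\mathbf{w})+\mathcal{K}(\mathbf{w};\mathbf{w}_*,\mathcal{X}),\qquad \hat{\mathbf{w}}_-=\arg\min_{\mathbf{w}}\ -\ell_k(\mathbf{w})+\mathcal{K}(\mathbf{w};\mathbf{w}_*,\mathcal{X}).$$ Then $\mathbf{w}_+=\hat{\mathbf{w}}_+$ and $\mathbf{w}_-=\hat{\mathbf{w}}_-$.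
   Context: All minimizations are over the parameter space $\mathbb{R}^P$. $\mathbf{w}_*$ is the base model trained on $\mathcal{D}$; the K-prior replaces the true labels $y_i$ by the base model's predictions $h(f_{\mathbf{w}_*}^i)$ and uses $\mathbf{w}_*$ as the center of the quadratic weight term. Example: for binary cross-entropy, $y\in\{0,1\}$, $A(f)=\log(1+e^f)$ and $h$ is the sigmoid. *)

From HB Require Import structures.
From mathcomp Require Import all_boot all_order all_algebra.
From mathcomp Require Import all_classical all_reals all_analysis.
Set Implicit Arguments. Unset Strict Implicit. Unset Printing Implicit Defensive.
Import Order.TTheory GRing.Theory Num.Theory.
Local Open Scope ring_scope.

Section Defs.
Variables (R : realType) (P : nat).

Definition dotv (u v : 'rV[R]_P) : R := \sum_(p < P) u 0 p * v 0 p.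

Definition sqnorm (u : 'rV[R]_P) : R := dotv u u.

Definition is_argmin (F : 'rV[R]_P -> R) (w : 'rV[R]_P) : Prop :=
  forall v, F w <= F v.
End Defs.

Definition strictly_convex (R : realType) (A : R -> R) : Prop :=
  forall x y t : R, x != y -> 0 < t -> t < 1 ->
    A (t * x + (1 - t) * y) < t * A x + (1 - t) * A y.

(* The K-prior is the training objective in disguise.  Expanding ||w - w_*||^2
   shows that K(w) = sum_D l_i(w) + R(w) + delta/2 ||w_*||^2 - g(w), where
   g(w) = sum_D (h(f_{w_*}^i) - y_i) f_w^i + delta w_*.w is the derivative of the
   objective at w_* in the direction w, hence zero at the minimiser w_*.  So
   l_j + K and -l_k + K are the objectives over D + j and D - k up to a constant,
   and these have a unique minimiser because the regulariser makes them strictly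
   convex (A itself need only be convex). *)

From HB Require Import structures.
From mathcomp Require Import all_boot all_order all_algebra.
From mathcomp Require Import all_classical all_reals all_analysis.
From mathcomp Require Import ring lra.
Set Implicit Arguments. Unset Strict Implicit. Unset Printing Implicit Defensive.
Import Order.TTheory GRing.Theory Num.Theory.
Local Open Scope ring_scope.

Section InnerProduct.
Variables (R : realType) (P : nat).
Implicit Types (u v w : 'rV[R]_P).

Lemma dotvC u v : dotv u v = dotv v u.
Proof. by apply: eq_bigr => p _; rewrite mulrC. Qed.

Lemma dotvDr u v w : dotv u (v + w) = dotv u v + dotv u w.
Proof. by rewrite /dotv -big_split; apply: eq_bigr => p _; rewrite mxE mulrDr. Qed.

Lemma dotvZr u a v : dotv u (a *: v) = a * dotv u v.
Proof. by rewrite /dotv mulr_sumr; apply: eq_bigr => p _; rewrite mxE mulrCA. Qed.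

Lemma dotvNr u v : dotv u (- v) = - dotv u v.
Proof. by rewrite -scaleN1r dotvZr mulN1r. Qed.

Lemma dotvDl u v w : dotv (v + w) u = dotv v u + dotv w u.
Proof. by rewrite dotvC dotvDr !(dotvC u). Qed.

Lemma dotvZl u a v : dotv (a *: v) u = a * dotv v u.
Proof. by rewrite dotvC dotvZr dotvC. Qed.

Lemma dotvNl u v : dotv (- v) u = - dotv v u.
Proof. by rewrite dotvC dotvNr dotvC. Qed.

Lemma sqnorm_gt0 u : u != 0 -> 0 < sqnorm u.
Proof.
move=> u_neq0; have sq_ge0 p : 0 <= u 0 p * u 0 p by rewrite -expr2 sqr_ge0.
rewrite lt_def sumr_ge0 ?andbT//; apply: contra u_neq0 => /eqP/psumr_eq0P u0.
apply/eqP/matrixP => i p; rewrite ord1 mxE.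
by apply/eqP; rewrite -[_ == 0]orbb -mulf_eq0 u0.
Qed.

Lemma sqnormB u v : sqnorm (u - v) = sqnorm u - 2 * dotv v u + sqnorm v.
Proof. by rewrite /sqnorm !(dotvDr, dotvDl, dotvNr, dotvNl) (dotvC u v); ring. Qed.

Lemma sqnormDZ u v s :
  sqnorm (u + s *: v) = sqnorm u + s * (2 * dotv u v) + s * (s * sqnorm v).
Proof. by rewrite /sqnorm !(dotvDr, dotvDl, dotvZr, dotvZl) (dotvC v u); ring. Qed.

Lemma sqnorm_midpoint u v :
  sqnorm (2^-1 *: (u + v)) = 2^-1 * (sqnorm u + sqnorm v) - 4^-1 * sqnorm (u - v).
Proof.
by rewrite /sqnorm !(dotvZr, dotvZl, dotvDr, dotvDl, dotvNr, dotvNl) (dotvC v u); field.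
Qed.

End InnerProduct.

Section Minimizers.
Variables (R : realType) (P : nat).
Implicit Types (F G : 'rV[R]_P -> R) (u v w : 'rV[R]_P).

Lemma is_argmin_shift F G c w :
  (forall v, F v = G v + c) -> is_argmin F w -> is_argmin G w.
Proof. by move=> FE Fw v; have := Fw v; rewrite !FE lerD2r. Qed.

Lemma is_argmin_unique F w v :
  (forall u u', u != u' -> F (2^-1 *: (u + u')) < 2^-1 * (F u + F u')) ->
  is_argmin F w -> is_argmin F v -> w = v.
Proof.
move=> Fmid Fw Fv; apply/eqP/negPn/negP => /Fmid.
have := Fw (2^-1 *: (w + v)); have := Fv w; lra.
Qed.

Lemma is_argmin_derive_line F w u (dF : R -> R) :
  is_argmin F w -> (forall t : R, is_derive t 1 (fun s => F (w + s *: u)) (dF t)) ->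
  dF 0 = 0.
Proof.
move=> Fw dFline.
have Fline0 : is_derive (0 : R) 1 (fun s => F (w + s *: u)) 0.
  apply: (@derive1_at_min _ _ (-1) 1) => [|t _|//|t _]; first lra.
  - by have [] := dFline t.
  - by rewrite in_itv /= ltrN10 ltr01.
  - by rewrite scale0r addr0; exact: Fw.
by case: (dFline 0) => _ <-; case: Fline0.
Qed.

End Minimizers.

Section RealDerivatives.
Variable R : realType.

Lemma is_derive1_comp (f g : R -> R) (t df dg : R) :
  is_derive t 1 f df -> is_derive (f t) 1 g dg -> is_derive t 1 (g \o f) (dg * df).
Proof.
move=> [fd fE] [gd gE].
have gfd : derivable (g \o f) t 1.
  by apply/derivable1_diffP/differentiable_comp; exact/derivable1_diffP.
by apply: DeriveDef => //; rewrite -derive1E derive1_comp // !derive1E fE gE.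
Qed.

Lemma is_derive_affine (a c t : R) : is_derive t 1 (fun s => a + s * c) c.
Proof.
have -> : (fun s => a + s * c) = cst a + id * cst c by [].
have := is_deriveD (is_derive_cst a t 1)
  (is_deriveM (is_derive_id t 1) (is_derive_cst c t 1)).
by move/is_derive_eq; apply; rewrite scaler0 !add0r /GRing.scale /= mulr1.
Qed.

Lemma is_derive_quadratic (q0 q1 q2 t : R) :
  is_derive t 1 (fun s => q0 + s * q1 + s * (s * q2)) (q1 + t * (2 * q2)).
Proof.
have -> : (fun s => q0 + s * q1 + s * (s * q2)) =
    (fun s => q0 + s * q1) + (fun s => 0 + s * 1) * (fun s => 0 + s * q2).
  by apply/funext => s; rewrite !fctE /=; ring.
have := is_deriveD (is_derive_affine q0 q1 t)
  (is_deriveM (is_derive_affine 0 1 t) (is_derive_affine 0 q2 t)).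
by move/is_derive_eq; apply; rewrite /GRing.scale /=; ring.
Qed.

End RealDerivatives.

Lemma is_derive_sqnorm_line (R : realType) (P : nat) (w u : 'rV[R]_P) (t : R) :
  is_derive t 1 (fun s => sqnorm (w + s *: u)) (2 * dotv (w + t *: u) u).
Proof.
under eq_fun do rewrite sqnormDZ.
have := is_derive_quadratic (sqnorm w) (2 * dotv w u) (sqnorm u) t.
by move/is_derive_eq; apply; rewrite dotvDl dotvZl /sqnorm; ring.
Qed.

Lemma strictly_convex_midpoint (R : realType) (A : R -> R) :
  strictly_convex A -> forall x z, A (2^-1 * (x + z)) <= 2^-1 * (A x + A z).
Proof.
move=> A_conv x z; have half_double (r : R) : 2^-1 * (r + r) = r by field.
have [<-|xz] := eqVneq x z; first by rewrite !half_double.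
have -> : 2^-1 * (x + z) = 2^-1 * x + (1 - 2^-1) * z by field.
have -> : 2^-1 * (A x + A z) = 2^-1 * A x + (1 - 2^-1) * A z by field.
by apply/ltW/A_conv => //; lra.
Qed.

Section GeneralizedLinearModel.
Variables (R : realType) (P : nat) (I : finType) (phi : I -> 'rV[R]_P).
Variables (A h : R -> R) (delta : R).
Implicit Types (y : I -> R) (S : {set I}) (u v w : 'rV[R]_P).

Definition glm_ell y i w := - y i * dotv (phi i) w + A (dotv (phi i) w).

Definition glm_loss y S w := \sum_(i in S) glm_ell y i w.

Definition glm_obj y S w := glm_loss y S w + 2^-1 * delta * sqnorm w.

Definition kprior S w_star w :=
  glm_loss (fun i => h (dotv (phi i) w_star)) S w + 2^-1 * delta * sqnorm (w - w_star).

Lemma glm_obj_setU1 y S j w : j \notin S ->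
  glm_obj y (S :|: [set j]) w = glm_ell y j w + glm_obj y S w.
Proof. by move=> jS; rewrite /glm_obj /glm_loss finset.setUC big_setU1 // addrA. Qed.

Lemma glm_obj_setD1 y S k w : k \in S ->
  glm_obj y (S :\ k) w = - glm_ell y k w + glm_obj y S w.
Proof. by move=> kS; rewrite /glm_obj /glm_loss (big_setD1 k kS) addrA addKr. Qed.

Section Uniqueness.
Hypothesis A_midconvex : forall x z, A (2^-1 * (x + z)) <= 2^-1 * (A x + A z).
Hypothesis delta_gt0 : 0 < delta.

Lemma glm_loss_midpoint y S u v :
  glm_loss y S (2^-1 *: (u + v)) <= 2^-1 * (glm_loss y S u + glm_loss y S v).
Proof.
rewrite -big_split mulr_sumr /=; apply: ler_sum => i _.
rewrite /glm_ell dotvZr dotvDr.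
have := A_midconvex (dotv (phi i) u) (dotv (phi i) v); lra.
Qed.

Lemma glm_obj_midpoint y S u v : u != v ->
  glm_obj y S (2^-1 *: (u + v)) < 2^-1 * (glm_obj y S u + glm_obj y S v).
Proof.
move=> uv; have := glm_loss_midpoint y S u v.
have /sqnorm_gt0/(mulr_gt0 delta_gt0) : u - v != 0 by rewrite subr_eq0.
rewrite /glm_obj sqnorm_midpoint; lra.
Qed.

Lemma glm_obj_argmin_unique y S w v :
  is_argmin (glm_obj y S) w -> is_argmin (glm_obj y S) v -> w = v.
Proof. exact/is_argmin_unique/glm_obj_midpoint. Qed.

End Uniqueness.

Section Stationarity.
Hypothesis A_derive : forall x : R, is_derive x 1 A (h x).

Lemma is_derive_glm_loss_line y S w u (t : R) :
  is_derive t 1 (fun s => glm_loss y S (w + s *: u))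
    (\sum_(i in S) (h (dotv (phi i) (w + t *: u)) - y i) * dotv (phi i) u).
Proof.
rewrite /glm_loss -fct_sumE.
elim/big_rec2: _ => [|i F dF _ dF_F]; first exact: is_derive_cst.
apply: is_deriveD dF_F; rewrite /glm_ell.
set a := dotv (phi i) w; set c := dotv (phi i) u.
under eq_fun do rewrite dotvDr dotvZr -/a -/c.
have -> : (fun s => - y i * (a + s * c) + A (a + s * c)) =
    (fun s => - y i * a + s * (- y i * c)) + (A \o (fun s => a + s * c)).
  by apply/funext => s; rewrite !fctE /=; ring.
have := is_deriveD (is_derive_affine (- y i * a) (- y i * c) t)
  (is_derive1_comp (is_derive_affine a c t) (A_derive _)).
by move/is_derive_eq; apply; rewrite dotvDr dotvZr -/a -/c; ring.
Qed.

Lemma glm_obj_stationary y S w : is_argmin (glm_obj y S) w -> forall u,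
  \sum_(i in S) (h (dotv (phi i) w) - y i) * dotv (phi i) u + delta * dotv w u = 0.
Proof.
move=> w_min u.
pose dF t := \sum_(i in S) (h (dotv (phi i) (w + t *: u)) - y i) * dotv (phi i) u
  + (2^-1 * delta) *: (2 * dotv (w + t *: u) u).
have <- : dF 0 =
    \sum_(i in S) (h (dotv (phi i) w) - y i) * dotv (phi i) u + delta * dotv w u.
  by rewrite /dF scale0r addr0 /GRing.scale /=; congr (_ + _); field.
apply: (is_argmin_derive_line w_min) => t.
exact: is_deriveD (is_derive_glm_loss_line _ _ _ _ _)
  (is_deriveZ _ (is_derive_sqnorm_line _ _ _)).
Qed.

Lemma kpriorE y S w_star w : is_argmin (glm_obj y S) w_star ->
  kprior S w_star w = glm_obj y S w + 2^-1 * delta * sqnorm w_star.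
Proof.
move=> /glm_obj_stationary/(_ w) grad0; rewrite /kprior /glm_obj sqnormB.
have -> : glm_loss (fun i => h (dotv (phi i) w_star)) S w = glm_loss y S w
    - \sum_(i in S) (h (dotv (phi i) w_star) - y i) * dotv (phi i) w.
  by rewrite /glm_loss -sumrB; apply: eq_bigr => i _; rewrite /glm_ell; ring.
lra.
Qed.

End Stationarity.
End GeneralizedLinearModel.

Theorem theorem1 (R : realType) (P : nat) (I : finType)
  (phi : I -> 'rV[R]_P) (y : I -> R) (A h : R -> R) (delta : R)
  (D : {set I}) (j k : I)
  (w_star w_plus w_minus what_plus what_minus : 'rV[R]_P) :
  strictly_convex A ->
  (forall x : R, is_derive x 1 A (h x)) ->
  0 < delta ->
  j \notin D -> k \in D ->
  let f (w : 'rV[R]_P) i := dotv (phi i) w in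
  let ell (i : I) (w : 'rV[R]_P) := - y i * f w i + A (f w i) in
  let Reg (w : 'rV[R]_P) := 2^-1 * delta * sqnorm w in
  let Kprior (w : 'rV[R]_P) :=
    \sum_(i in D) (- h (f w_star i) * f w i + A (f w i))
    + 2^-1 * delta * sqnorm (w - w_star) in
  is_argmin (fun w => \sum_(i in D) ell i w + Reg w) w_star ->
  is_argmin (fun w => \sum_(i in D :|: [set j]) ell i w + Reg w) w_plus ->
  is_argmin (fun w => \sum_(i in D :\ k) ell i w + Reg w) w_minus ->
  is_argmin (fun w => ell j w + Kprior w) what_plus ->
  is_argmin (fun w => - ell k w + Kprior w) what_minus ->
  w_plus = what_plus /\ w_minus = what_minus.
Proof.
move=> A_conv A_derive delta_gt0 jD kD f ell Reg Kprior.
move=> w_star_min w_plus_min w_minus_min what_plus_min what_minus_min.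
have A_mid := strictly_convex_midpoint A_conv.
have KpriorE w : Kprior w = glm_obj phi A delta y D w + 2^-1 * delta * sqnorm w_star.
  exact: (kpriorE A_derive (y := y) (S := D) w w_star_min).
split.
- apply: (glm_obj_argmin_unique A_mid delta_gt0 w_plus_min).
  apply: is_argmin_shift what_plus_min => v.
  by rewrite KpriorE glm_obj_setU1 // addrA.
- apply: (glm_obj_argmin_unique A_mid delta_gt0 w_minus_min).
  apply: is_argmin_shift what_minus_min => v.
  by rewrite KpriorE glm_obj_setD1 // addrA.
Qed.
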